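(* Let $H$ be the group with presentation $$\langle \{x_m\}_{m\in\mathbb{Z}}\cup\{y_n\}_{n\in\mathbb{Z}} \mid \{\,y_n = x_{n+1}^{-1}y_{n+1}^{-1}x_{n+1}\,\}_{n\in\mathbb{Z}}\rangle.$$ Then $H$ is locally free, and each of the generators $x_m$ ($m\in\mathbb{Z}$) and $y_n$ ($n\in\mathbb{Z}$) represents a nontrivial element of $H$.
   Context: A group is locally free if every finitely generated subgroup is free. Work in $\mathsf{ZFC}$. *)

(* The group H is given by its presentation: elements are
   words in the generators x_m, y_n and their inverses, modulo the
   congruence generated by free cancellation and insertion of relators. *)
From Stdlib Require Import ZArith List Relations.
Import ListNotations.
Open Scope Z_scope.

Inductive gen : Type := X (m : Z) | Y (n : Z).

(* a letter: a generator together with an exponent sign (true = inverse) *)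
Definition letter : Type := (gen * bool)%type.
Definition word : Type := list letter.

Definition flip (a : letter) : letter := (fst a, negb (snd a)).
Definition winv (w : word) : word := rev (map flip w).

Definition gx (m : Z) : word := [(X m, false)].
Definition gy (n : Z) : word := [(Y n, false)].

(* relator for  y_n = x_{n+1}^{-1} y_{n+1}^{-1} x_{n+1}, i.e.
   y_n (x_{n+1}^{-1} y_{n+1}^{-1} x_{n+1})^{-1} *)
Definition relator (n : Z) : word :=
  gy n ++ winv (winv (gx (n+1)) ++ winv (gy (n+1)) ++ gx (n+1)).

Inductive step : word -> word -> Prop :=
| step_cancel (u v : word) (a : letter) : step (u ++ v) (u ++ [a; flip a] ++ v)
| step_rel (u v : word) (n : Z) : step (u ++ v) (u ++ relator n ++ v).

Definition heq : word -> word -> Prop := clos_refl_sym_trans word step.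

Fixpoint evalw {I : Type} (b : I -> word) (ws : list (I * bool)) : word :=
  match ws with
  | [] => []
  | (i, e) :: ws' => (if e then winv (b i) else b i) ++ evalw b ws'
  end.

Fixpoint reduced {I : Type} (ws : list (I * bool)) : Prop :=
  match ws with
  | (i, e) :: (((j, f) :: _) as ws') => ~ (i = j /\ f = negb e) /\ reduced ws'
  | _ => True
  end.

Definition gen_sub (gs : list word) (w : word) : Prop :=
  exists ws : list (word * bool),
    (forall p, In p ws -> In (fst p) gs) /\ heq w (evalw (fun u => u) ws).

Definition free_on (S : word -> Prop) {I : Type} (b : I -> word) : Prop :=
  (forall i, S (b i)) /\
  (forall w, S w -> exists ws, heq w (evalw b ws)) /\
  (forall ws, ws <> [] -> reduced ws -> ~ heq (evalw b ws) []).

Definition is_free (S : word -> Prop) : Prop :=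
  exists (I : Type) (b : I -> word), free_on S b.

Definition H_locally_free : Prop :=
  forall gs : list word, is_free (gen_sub gs).

(* The relations let one eliminate every y_n with n <> 0: it is
   an explicit conjugate [y_word n] of y_0 or y_0^-1 by x-letters.  The
   substitution [retract] replacing each y_n by [y_word n] is invariant under
   the defining moves of H, and followed by free reduction [nf] it yields a
   normal form: two words are equal in H iff their retractions have the same
   free reduction ([heq_iff_retract]).  Thus H is the free group on the
   "basic" letters x_m, y_0, and local freeness becomes Nielsen's theorem for
   finitely generated subgroups of a free group.  We prove the latter by
   Nielsen reduction: a finite family of reduced basic words is transformed,
   by moves preserving the generated subgroup and decreasing a well-founded
   measure, into a Nielsen-reduced family ([nielsen_reduction]); in a freely
   reduced product of elements of such a family some letters of the first
   factor survive free reduction ([nielsen_product_nontrivial]), so the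
   family is a free basis.  Finally x_m retracts to itself, and y_n retracts
   to a word of y-exponent sum +-1, so neither is trivial. *)

From Stdlib Require Import ZArith List.
From Stdlib Require Import Lia Classical ProofIrrelevance Wellfounded Relations.
Import ListNotations.
Open Scope nat_scope.

(** * Words, inverses and free reduction *)

Lemma flip_flip : forall a, flip (flip a) = a.
Proof. intros [g e]; unfold flip; simpl; rewrite Bool.negb_involutive; reflexivity. Qed.

Lemma flip_neq : forall a, flip a <> a.
Proof. intros [g e]; unfold flip; simpl; intro H; inversion H; destruct e; discriminate. Qed.

Lemma winv_app : forall u v, winv (u ++ v) = winv v ++ winv u.
Proof. intros; unfold winv; rewrite map_app, rev_app_distr; reflexivity. Qed.

Lemma winv_winv : forall u, winv (winv u) = u.
Proof.
  intros; unfold winv; rewrite map_rev, rev_involutive, map_map.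
  rewrite <- (map_id u) at 2. apply map_ext. apply flip_flip.
Qed.

Lemma winv_cons : forall a u, winv (a :: u) = winv u ++ [flip a].
Proof. reflexivity. Qed.

Lemma winv_length : forall u, length (winv u) = length u.
Proof. intros; unfold winv; rewrite length_rev, length_map; reflexivity. Qed.

Lemma winv_inj : forall u v, winv u = winv v -> u = v.
Proof. intros u v H. rewrite <- (winv_winv u), <- (winv_winv v), H; reflexivity. Qed.

Definition letter_eq_dec : forall a b : letter, {a = b} + {a <> b}.
Proof. decide equality. apply Bool.bool_dec. decide equality; apply Z.eq_dec. Qed.

(* From now on [flip] stays folded, so that simplification keeps letters abstract. *)
Arguments flip : simpl never.

Fixpoint is_reduced (w : word) : Prop :=
  match w with
  | a :: ((b :: _) as w') => b <> flip a /\ is_reduced w'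
  | _ => True
  end.

Lemma is_reduced_tail : forall a w, is_reduced (a :: w) -> is_reduced w.
Proof. intros a [|b w] H; simpl in *; tauto. Qed.

Lemma is_reduced_app_l : forall x y, is_reduced (x ++ y) -> is_reduced x.
Proof.
  induction x as [|a x IH]; intros y H; simpl in *; auto.
  destruct x as [|b x]; simpl in *; auto.
  destruct H as [H1 H2]; split; auto. apply (IH y); exact H2.
Qed.

Lemma is_reduced_app_r : forall x y, is_reduced (x ++ y) -> is_reduced y.
Proof.
  induction x as [|a x IH]; intros y H; simpl in *; auto.
  apply IH. apply (is_reduced_tail a). exact H.
Qed.

Lemma is_reduced_infix : forall p m q, is_reduced (p ++ m ++ q) -> is_reduced m.
Proof. intros p m q H. apply is_reduced_app_r in H. apply is_reduced_app_l in H. exact H. Qed.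

Lemma is_reduced_app_iff : forall x a y,
  is_reduced (x ++ a :: y) <-> is_reduced (x ++ [a]) /\ is_reduced (a :: y).
Proof.
  induction x as [|c x IH]; intros a y; simpl.
  - destruct y; simpl; tauto.
  - destruct x as [|d x]; simpl.
    + destruct y; simpl; tauto.
    + specialize (IH a y). simpl in IH. tauto.
Qed.

Lemma is_reduced_app : forall x y, is_reduced x -> is_reduced y ->
  (forall x' a b y', x = x' ++ [a] -> y = b :: y' -> b <> flip a) -> is_reduced (x ++ y).
Proof.
  intros x y Hx Hy Hb. destruct y as [|b y'].
  - rewrite app_nil_r; auto.
  - destruct x as [|c x0]; [simpl; auto|].
    destruct (exists_last (l:=c::x0)) as [x' [a Ex]]; [discriminate|].
    rewrite Ex in *. rewrite <- app_assoc. simpl. apply is_reduced_app_iff. split; auto.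
    simpl. split; auto. eapply Hb; eauto.
Qed.

Lemma is_reduced_winv : forall x, is_reduced x -> is_reduced (winv x).
Proof.
  induction x as [|a x IH]; intros H; [simpl; auto|].
  rewrite winv_cons. apply is_reduced_app.
  - apply IH. eapply is_reduced_tail; eauto.
  - simpl; auto.
  - intros x' c b y' E1 E2. inversion E2; subst.
    destruct x as [|d t]; [destruct x'; simpl in E1; discriminate|].
    rewrite winv_cons in E1. apply app_inj_tail in E1. destruct E1 as [_ <-].
    simpl in H. destruct H as [H _].
    intro E. apply H. rewrite flip_flip in E. rewrite <- E. reflexivity.
Qed.

Lemma winv_app_self_reduced : forall s, is_reduced (winv s ++ s) -> s = [].
Proof.
  intros [|b s] H; auto. exfalso. rewrite winv_cons, <- app_assoc in H. simpl in H.
  apply is_reduced_app_iff in H. destruct H as [_ H]. simpl in H. destruct H as [H _].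
  apply H. rewrite flip_flip; reflexivity.
Qed.

(* No nonempty reduced word is its own inverse (its middle would cancel). *)
Lemma winv_fixed_reduced : forall x, is_reduced x -> winv x = x -> x = [].
Proof.
  intros x. induction x as [x IH] using (induction_ltof1 _ (@length letter)).
  intros Hr He. destruct x as [|a x']; auto. exfalso.
  destruct x' as [|b0 x0].
  - simpl in He. inversion He. eapply flip_neq; eauto.
  - destruct (exists_last (l:=b0::x0)) as [m [b Em]]; [discriminate|].
    rewrite Em in *. rewrite winv_cons, winv_app in He. simpl in He.
    inversion He as [[E1 E2]]. rewrite flip_flip in E2.
    apply app_inj_tail in E2. destruct E2 as [E3 _].
    assert (Hm : m = []).
    { apply IH; auto; [|apply (is_reduced_infix [a] m [b]); exact Hr].
      unfold ltof. simpl. rewrite length_app. simpl. lia. }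
    subst m. simpl in Hr. destruct Hr as [Hr _].
    apply Hr. rewrite <- E1, flip_flip. reflexivity.
Qed.

Definition cons_red (a : letter) (r : word) : word :=
  match r with
  | b :: r' => if letter_eq_dec b (flip a) then r' else a :: r
  | [] => [a]
  end.

Definition nf (w : word) : word := fold_right cons_red [] w.

Lemma cons_red_reduced : forall a r, is_reduced r -> is_reduced (cons_red a r).
Proof.
  intros a [|b r] H; simpl; auto.
  destruct (letter_eq_dec b (flip a)); [eapply is_reduced_tail; eauto|simpl; split; auto].
Qed.

Lemma fold_cons_red_reduced : forall x r, is_reduced r -> is_reduced (fold_right cons_red r x).
Proof. induction x; simpl; intros; auto. apply cons_red_reduced; auto. Qed.

Lemma nf_reduced : forall w, is_reduced (nf w).
Proof. intros; apply fold_cons_red_reduced; simpl; auto. Qed.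

Lemma nf_id : forall w, is_reduced w -> nf w = w.
Proof.
  induction w as [|a w IH]; intros H; simpl; auto.
  rewrite IH by (eapply is_reduced_tail; eauto).
  destruct w as [|b w]; simpl; auto.
  destruct (letter_eq_dec b (flip a)); auto. simpl in H. tauto.
Qed.

Lemma nf_idem : forall x, nf (nf x) = nf x.
Proof. intros; apply nf_id, nf_reduced. Qed.

Lemma cons_red_cancel : forall a R, is_reduced R -> cons_red a (cons_red (flip a) R) = R.
Proof.
  intros a [|c R] H; simpl.
  - destruct (letter_eq_dec (flip a) (flip a)); congruence.
  - rewrite flip_flip. destruct (letter_eq_dec c a).
    + subst c. destruct R as [|d R]; simpl; auto.
      destruct (letter_eq_dec d (flip a)); auto. simpl in H; tauto.
    + simpl. destruct (letter_eq_dec (flip a) (flip a)); congruence.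
Qed.

Lemma fold_cons_red_nf : forall x r, is_reduced r ->
  fold_right cons_red r x = fold_right cons_red r (nf x).
Proof.
  induction x as [|a x IH]; intros r Hr; simpl; auto.
  rewrite (IH r Hr). unfold nf at 2. simpl. fold (nf x).
  destruct (nf x) as [|b t] eqn:E; simpl; auto.
  destruct (letter_eq_dec b (flip a)); simpl; auto.
  subst b. rewrite cons_red_cancel; auto. apply fold_cons_red_reduced; auto.
Qed.

Lemma nf_app : forall x y, nf (x ++ y) = nf (nf x ++ nf y).
Proof.
  assert (Happ : forall x y, nf (x ++ y) = fold_right cons_red (nf y) x)
    by (intros; unfold nf; rewrite fold_right_app; reflexivity).
  intros. rewrite !Happ, nf_idem. apply fold_cons_red_nf, nf_reduced.
Qed.

Lemma nf_inv_r : forall x, nf (x ++ winv x) = [].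
Proof.
  induction x as [|a x IH]; simpl; auto.
  change (cons_red a (nf (x ++ winv (a :: x))) = []).
  rewrite winv_cons, app_assoc, nf_app, IH. simpl.
  destruct (letter_eq_dec (flip a) (flip a)); congruence.
Qed.

Lemma nf_inv_l : forall x, nf (winv x ++ x) = [].
Proof. intros. rewrite <- (winv_winv x) at 2. apply nf_inv_r. Qed.

Lemma nf_cancel_mid : forall m x y, nf m = [] -> nf (x ++ m ++ y) = nf (x ++ y).
Proof.
  intros m x y H. rewrite nf_app, (nf_app m y), H. simpl. rewrite nf_idem.
  rewrite <- nf_app. reflexivity.
Qed.

Lemma nf_cancel_r : forall m x, nf m = [] -> nf (x ++ m) = nf x.
Proof.
  intros. rewrite <- (app_nil_r (x ++ m)), <- app_assoc, nf_cancel_mid; auto.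
  rewrite app_nil_r; auto.
Qed.

Lemma nf_incl : forall w a, In a (nf w) -> In a w.
Proof.
  induction w as [|b w IH]; intros a H; [exact H|].
  change (In a (cons_red b (nf w))) in H. simpl.
  destruct (nf w) as [|c r] eqn:E; simpl in H.
  - destruct H as [H|[]]; auto.
  - destruct (letter_eq_dec c (flip b)).
    + right. apply IH. right. auto.
    + destruct H as [H|H]; auto.
Qed.

(** * Cancellation between two reduced words *)

(* [cancel_prefix r v]: how many leading letters of [v] are inverse to the
   corresponding leading letters of [r]; with [r = rev u] this is the number
   of letters cancelling in the product [u ++ v]. *)
Fixpoint cancel_prefix (r v : word) : nat :=
  match r, v with
  | a :: r', b :: v' => if letter_eq_dec b (flip a) then S (cancel_prefix r' v') else 0
  | _, _ => 0
  end.

Definition cancel_len (u v : word) : nat := cancel_prefix (rev u) v.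

Lemma cancel_prefix_split : forall r v, exists s r1 v1,
  r = s ++ r1 /\ v = map flip s ++ v1 /\ length s = cancel_prefix r v /\
  (forall a b r' v', r1 = a :: r' -> v1 = b :: v' -> b <> flip a).
Proof.
  induction r as [|a r IH]; intros v.
  - exists [], [], v. simpl; repeat split; auto. intros; discriminate.
  - destruct v as [|b v].
    + exists [], (a :: r), []. simpl; repeat split; auto. intros; discriminate.
    + simpl. destruct (letter_eq_dec b (flip a)).
      * destruct (IH v) as [s [r1 [v1 [E1 [E2 [E3 E4]]]]]].
        exists (a :: s), r1, v1. subst. simpl. repeat split; auto.
      * exists [], (a :: r), (b :: v). simpl; repeat split; auto.
        intros a' b' r' v' H1 H2. inversion H1; inversion H2; subst; auto.
Qed.

Lemma cancel_prefix_app : forall r p x y,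
  cancel_prefix r (p ++ x) < length p -> cancel_prefix r (p ++ y) = cancel_prefix r (p ++ x).
Proof.
  induction r as [|a r IH]; intros p x y H; simpl; auto.
  destruct p as [|b p]; simpl in *; [lia|].
  destruct (letter_eq_dec b (flip a)); auto. f_equal. apply IH. lia.
Qed.

Lemma cancel_prefix_flip : forall a b,
  cancel_prefix (map flip a) (map flip b) = cancel_prefix b a.
Proof.
  induction a as [|x a IH]; intros [|y b]; simpl; auto.
  destruct (letter_eq_dec (flip y) (flip (flip x))) as [E|E];
  destruct (letter_eq_dec x (flip y)) as [E'|E']; auto.
  - rewrite flip_flip in E. exfalso; apply E'. rewrite <- E; auto.
  - exfalso; apply E. rewrite E', !flip_flip. reflexivity.
Qed.

Lemma cancel_len_inv : forall u v, cancel_len (winv v) (winv u) = cancel_len u v.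
Proof.
  intros. unfold cancel_len, winv. rewrite rev_involutive, <- map_rev. apply cancel_prefix_flip.
Qed.

Lemma cancel_split : forall u v, is_reduced u -> is_reduced v -> exists u1 s v1,
  u = u1 ++ s /\ v = winv s ++ v1 /\ length s = cancel_len u v /\
  nf (u ++ v) = u1 ++ v1 /\ is_reduced (u1 ++ v1).
Proof.
  intros u v Hu Hv. unfold cancel_len.
  destruct (cancel_prefix_split (rev u) v) as [s [r1 [v1 [E1 [E2 [E3 E4]]]]]].
  assert (Eu : u = rev r1 ++ rev s) by (rewrite <- rev_app_distr, <- E1, rev_involutive; auto).
  assert (Ew : winv (rev s) = map flip s) by (unfold winv; rewrite map_rev, rev_involutive; auto).
  assert (Hred : is_reduced (rev r1 ++ v1)).
  { apply is_reduced_app.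
    - rewrite Eu in Hu. eapply is_reduced_app_l; eauto.
    - rewrite E2 in Hv. eapply is_reduced_app_r; eauto.
    - intros x' a b y' H1 H2. apply (E4 a b (rev x') y'); auto.
      rewrite <- (rev_involutive r1), H1, rev_app_distr. reflexivity. }
  exists (rev r1), (rev s), v1. repeat split; auto.
  - rewrite Ew; auto.
  - rewrite length_rev; auto.
  - rewrite Eu, E2, <- Ew, <- app_assoc, (app_assoc (rev s)), nf_cancel_mid by apply nf_inv_r.
    apply nf_id; auto.
Qed.

Lemma app_split_le : forall (a b c d : word), a ++ b = c ++ d -> length a <= length c ->
  exists m, c = a ++ m /\ b = m ++ d.
Proof.
  induction a as [|x a IH]; intros b c d E H; [exists c; auto|].
  destruct c as [|y c]; simpl in H; [lia|].
  simpl in E. inversion E; subst. destruct (IH b c d) as [m [E1 E2]]; auto; [lia|].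
  exists m; subst; auto.
Qed.

Lemma app_split_eq : forall (a b c d : word), a ++ b = c ++ d -> length a = length c ->
  a = c /\ b = d.
Proof.
  intros a b c d E H. destruct (app_split_le a b c d) as [m [E1 E2]]; auto; [lia|].
  subst c. rewrite length_app in H. destruct m; simpl in H; [|lia].
  rewrite app_nil_r in *; auto.
Qed.

(* A nonempty reduced word cancels less than half of itself against itself:
   otherwise it would contain a self-inverse reduced middle segment. *)
Lemma cancel_len_self : forall u, is_reduced u -> u <> [] -> 2 * cancel_len u u < length u.
Proof.
  intros u Hu Hne. destruct (cancel_split u u Hu Hu) as [u1 [s [v1 [E1 [E2 [E3 _]]]]]].
  destruct (Nat.lt_ge_cases (2 * cancel_len u u) (length u)) as [H|H]; auto. exfalso.
  assert (Lu : length u = length u1 + length s) by (rewrite E1, length_app; auto).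
  assert (Lv : length u = length s + length v1) by (rewrite E2, length_app, winv_length; auto).
  assert (E : u1 ++ s = winv s ++ v1) by congruence.
  destruct (app_split_le u1 s (winv s) v1 E) as [m [F1 F2]]; [rewrite winv_length; lia|].
  rewrite F2, winv_app in F1.
  destruct (app_split_eq (winv v1) (winv m) u1 m) as [G1 G2]; auto; [rewrite winv_length; lia|].
  assert (Hm : m = []).
  { apply winv_fixed_reduced; auto. rewrite E1, F2 in Hu. apply (is_reduced_infix u1 m v1); auto. }
  subst m. simpl in F2. subst s. subst u1. rewrite E1 in Hu. apply winv_app_self_reduced in Hu.
  subst v1. apply Hne. apply length_zero_iff_nil. simpl in Lu. lia.
Qed.

(** * Nielsen-reduced families *)

Definition in_sym (U : list word) (z : word) : Prop := In z U \/ In (winv z) U.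

Definition all_reduced (U : list word) : Prop := forall x, In x U -> is_reduced x.

(* Nielsen's conditions on a finite family [U] of reduced words:
   (N0) no element is empty; no element occurs twice, or together with its
   inverse; (N1) in a product [u v] of non-inverse elements of [U^{+-1}] at most
   half of each factor cancels; (N2) in a product [u v w] some letter of the
   middle factor survives on both sides. *)
Definition nielsen_reduced (U : list word) : Prop :=
  (forall x, In x U -> x <> []) /\
  (forall pre x post, U = pre ++ x :: post ->
     ~ In x (pre ++ post) /\ ~ In (winv x) (pre ++ post)) /\
  (forall u v, in_sym U u -> in_sym U v -> v <> winv u ->
     2 * cancel_len u v <= length u /\ 2 * cancel_len u v <= length v) /\
  (forall u v w, in_sym U u -> in_sym U v -> in_sym U w -> v <> winv u -> w <> winv v ->
     cancel_len u v + cancel_len v w < length v).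

Lemma in_sym_reduced : forall U z, all_reduced U -> in_sym U z -> is_reduced z.
Proof.
  intros U z H [Hz|Hz]; auto. apply H, is_reduced_winv in Hz. rewrite winv_winv in Hz; auto.
Qed.

Lemma in_sym_nonempty : forall U z, (forall x, In x U -> x <> []) -> in_sym U z -> z <> [].
Proof.
  intros U z H [Hz|Hz]; auto. apply H in Hz. intro E; subst; apply Hz; reflexivity.
Qed.

Fixpoint no_inverse_pair (zs : list word) : Prop :=
  match zs with
  | z :: ((z' :: _) as r) => z' <> winv z /\ no_inverse_pair r
  | _ => True
  end.

Definition next_cancel (z : word) (zs : list word) : nat :=
  match zs with z1 :: _ => cancel_len z z1 | [] => 0 end.

Lemma nielsen_product_prefix : forall U, all_reduced U -> nielsen_reduced U ->
  forall zs z0, Forall (in_sym U) (z0 :: zs) -> no_inverse_pair (z0 :: zs) ->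
  exists z0' s t, z0 = z0' ++ s /\ nf (concat (z0 :: zs)) = z0' ++ t /\
                  length s = next_cancel z0 zs.
Proof.
  intros U HA HN. induction zs as [|z1 zs IH]; intros z0 HF Hc.
  - exists z0, [], []. simpl. rewrite !app_nil_r. split; auto. split; auto.
    apply nf_id. apply (in_sym_reduced U); auto. inversion HF; auto.
  - inversion HF as [|? ? Hz0 HF1]; subst. destruct Hc as [Hc1 Hc2].
    destruct (IH z1 HF1 Hc2) as [z1' [s1 [t1 [E1 [E2 E3]]]]].
    assert (Hr0 : is_reduced z0) by (apply (in_sym_reduced U); auto).
    assert (Hz1 : in_sym U z1) by (inversion HF1; auto).
    pose proof HN as [HN0 [HN1 [HN2 HN3]]].
    assert (Hk : cancel_len z0 z1 < length z1').
    { assert (L1 : length z1 = length z1' + length s1) by (rewrite E1, length_app; auto).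
      destruct zs as [|z2 zs].
      - simpl in E3. destruct (HN2 z0 z1 Hz0 Hz1 Hc1) as [_ H2].
        assert (z1 <> []) by (apply (in_sym_nonempty U); [apply HN|auto]).
        destruct z1; [congruence|]. simpl in *. lia.
      - simpl in E3. inversion HF1 as [|? ? _ HF2]. inversion HF2 as [|? ? Hz2 _].
        destruct Hc2 as [Hc3 _].
        pose proof (HN3 z0 z1 z2 Hz0 Hz1 Hz2 Hc1 Hc3). lia. }
    assert (Hk2 : cancel_len z0 (z1' ++ t1) = cancel_len z0 z1).
    { unfold cancel_len. rewrite E1. apply cancel_prefix_app. rewrite <- E1. exact Hk. }
    assert (Hr1 : is_reduced (z1' ++ t1)) by (rewrite <- E2; apply nf_reduced).
    destruct (cancel_split z0 (z1' ++ t1) Hr0 Hr1) as [u1 [s [v1 [F1 [F2 [F3 [F4 F5]]]]]]].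
    exists u1, s, v1. split; auto. split.
    + change (concat (z0 :: z1 :: zs)) with (z0 ++ concat (z1 :: zs)).
      rewrite nf_app, E2, (nf_id z0) by auto. exact F4.
    + simpl. rewrite F3, Hk2. reflexivity.
Qed.

Lemma nielsen_product_nontrivial : forall U, all_reduced U -> nielsen_reduced U ->
  forall zs, zs <> [] -> Forall (in_sym U) zs -> no_inverse_pair zs -> nf (concat zs) <> [].
Proof.
  intros U HA HN [|z0 zs] Hne HF Hc; [congruence|].
  destruct (nielsen_product_prefix U HA HN zs z0 HF Hc) as [z0' [s [t [E1 [E2 E3]]]]].
  rewrite E2. intro E. apply app_eq_nil in E. destruct E as [E _]. subst z0'.
  simpl in E1. subst s.
  assert (Hz0 : in_sym U z0) by (inversion HF; auto).
  assert (z0 <> []) by (apply (in_sym_nonempty U); [apply HN|auto]).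
  destruct zs as [|z1 zs]; simpl in E3.
  - destruct z0; [congruence|simpl in E3; lia].
  - inversion HF as [|? ? _ HF1]. inversion HF1 as [|? ? Hz1 _].
    destruct Hc as [Hc _]. destruct HN as [_ [_ [HN2 _]]].
    destruct (HN2 z0 z1 Hz0 Hz1 Hc) as [Hq _].
    destruct z0; [congruence|simpl in *; lia].
Qed.

(** * A well-founded measure on finite families of words *)

(* Letters are ordered through an injective code in [nat]. *)
Definition z_code (z : Z) : nat :=
  match z with Z0 => 0 | Zpos p => 2 * Pos.to_nat p | Zneg p => 2 * Pos.to_nat p + 1 end.

Definition gen_code (g : gen) : nat :=
  match g with X m => 2 * z_code m | Y n => 2 * z_code n + 1 end.

Definition letter_code (a : letter) : nat := 2 * gen_code (fst a) + (if snd a then 1 else 0).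

Lemma letter_code_inj : forall a b, letter_code a = letter_code b -> a = b.
Proof.
  assert (Hz : forall a b, z_code a = z_code b -> a = b).
  { intros [|p|p] [|q|q]; simpl; intro H; auto;
    try (pose proof (Pos2Nat.is_pos p)); try (pose proof (Pos2Nat.is_pos q)); try lia;
    f_equal; apply Pos2Nat.inj; lia. }
  assert (Hg : forall a b, gen_code a = gen_code b -> a = b)
    by (intros [m|m] [n|n]; simpl; intro H; try lia; f_equal; apply Hz; lia).
  intros [g e] [h f]; unfold letter_code; simpl; intro H.
  assert (gen_code g = gen_code h /\ e = f) as [H1 H2] by (destruct e, f; split; auto; lia).
  apply Hg in H1. subst; auto.
Qed.

Fixpoint lex_lt (l l' : word) : Prop :=
  match l, l' with
  | a :: t, b :: t' => letter_code a < letter_code b \/ (a = b /\ lex_lt t t')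
  | _, _ => False
  end.

Definition lex_lt_eq_len (l l' : word) : Prop := length l = length l' /\ lex_lt l l'.

Lemma lex_lt_eq_len_wf : well_founded lex_lt_eq_len.
Proof.
  assert (H : forall n l, length l = n -> Acc lex_lt_eq_len l).
  { induction n as [|n IHn]; intros l Hl.
    - destruct l; [|discriminate]. constructor. intros y [_ Hy].
      destruct y; simpl in Hy; contradiction.
    - assert (K : forall m a, letter_code a = m -> forall l0, Acc lex_lt_eq_len l0 ->
                  length l0 = n -> Acc lex_lt_eq_len (a :: l0)).
      { induction m as [m IHm] using (well_founded_induction lt_wf).
        intros a Ha l0 Hacc. induction Hacc as [l0 _ IHacc]. intros Hl0.
        constructor. intros y [Hy1 Hy2]. destruct y as [|b y]; simpl in Hy2; [contradiction|].
        simpl in Hy1. destruct Hy2 as [Hy2|[Hy2 Hy3]].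
        - apply (IHm (letter_code b)); [subst; auto|auto|apply IHn; lia|lia].
        - subst b. apply IHacc; [split; auto; lia|lia]. }
      destruct l as [|a l0]; [discriminate|]. simpl in Hl.
      apply (K (letter_code a)); auto. }
  intro l. apply (H (length l)); auto.
Qed.

Lemma lex_lt_total : forall a b, length a = length b -> a <> b -> lex_lt a b \/ lex_lt b a.
Proof.
  induction a as [|x a IH]; intros [|y b] Hl Hne; simpl in *; try lia; try congruence.
  destruct (Nat.lt_trichotomy (letter_code x) (letter_code y)) as [H|[H|H]]; auto.
  apply letter_code_inj in H. subst y.
  assert (a <> b) by congruence. destruct (IH b) as [K|K]; auto.
Qed.

Lemma lex_lt_app : forall a b m m', lex_lt a b -> lex_lt (a ++ m) (b ++ m').
Proof.
  induction a as [|x a IH]; intros [|y b] m m' H; simpl in *; try contradiction.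
  destruct H as [H|[H1 H2]]; auto.
Qed.

Inductive one_lt {A : Type} (r : A -> A -> Prop) : list A -> list A -> Prop :=
| one_lt_here : forall x x' l, r x' x -> one_lt r (x' :: l) (x :: l)
| one_lt_there : forall x l l', one_lt r l' l -> one_lt r (x :: l') (x :: l).

Lemma one_lt_wf : forall A (r : A -> A -> Prop), well_founded r -> well_founded (one_lt r).
Proof.
  intros A r Hr.
  assert (K : forall x, Acc r x -> forall l, Acc (one_lt r) l -> Acc (one_lt r) (x :: l)).
  { intros x Hx. induction Hx as [x _ IHx]. intros l Hl. induction Hl as [l Hl' IHl].
    constructor. intros y Hy. inversion Hy; subst.
    - apply IHx; auto. constructor; auto.
    - apply IHl; auto. }
  intros l. induction l as [|x l IH].
  - constructor. intros y Hy. inversion Hy.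
  - apply K; auto.
Qed.

Lemma one_lt_mid : forall A (r : A -> A -> Prop) pre x x' post, r x' x ->
  one_lt r (pre ++ x' :: post) (pre ++ x :: post).
Proof. intros. induction pre; simpl; constructor; auto. Qed.

(* A Nielsen move of "equal
   length" type changes the last half of the moved element (or of its
   inverse) and leaves the other unchanged, so the pair below decreases. *)
Definition tail_half (z : word) : word := rev (skipn (length z - length z / 2) z).
Definition word_key (x : word) : list word := [tail_half x; tail_half (winv x)].
Definition word_lt (x' x : word) : Prop := one_lt lex_lt_eq_len (word_key x') (word_key x).

Lemma word_lt_wf : well_founded word_lt.
Proof.
  unfold word_lt. apply (Inverse_Image.wf_inverse_image _ _ (one_lt lex_lt_eq_len) word_key).
  apply one_lt_wf, lex_lt_eq_len_wf.
Qed.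

Definition total_size (U : list word) : nat :=
  fold_right (fun x acc => length x + 1 + acc) 0 U.

Lemma total_size_app : forall U V, total_size (U ++ V) = total_size U + total_size V.
Proof. induction U; simpl; intros; auto. rewrite IHU; lia. Qed.

Definition family_lt (V U : list word) : Prop :=
  total_size V < total_size U \/ (total_size V = total_size U /\ one_lt word_lt V U).

Lemma family_lt_wf : well_founded family_lt.
Proof.
  assert (H : forall n U, total_size U = n -> Acc family_lt U).
  { induction n as [n IHn] using (well_founded_induction lt_wf).
    intros U HU. pose proof (one_lt_wf _ _ word_lt_wf U) as Ha.
    induction Ha as [U _ IHa]. constructor. intros V [HV|[HV1 HV2]].
    - apply (IHn (total_size V)); auto. lia.
    - apply IHa; auto. lia. }
  intros U; apply (H (total_size U)); auto.
Qed.

Lemma family_lt_remove : forall pre x post, family_lt (pre ++ post) (pre ++ x :: post).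
Proof. intros. left. rewrite !total_size_app. simpl. lia. Qed.

Definition replace_lt (u' u : word) : Prop :=
  length u' < length u \/
  (length u' = length u /\ tail_half (winv u') = tail_half (winv u) /\
   lex_lt_eq_len (tail_half u') (tail_half u)).

Lemma family_lt_replace : forall pre post x x' u u', replace_lt u' u ->
  (x = u /\ x' = u') \/ (x = winv u /\ x' = winv u') ->
  family_lt (pre ++ x' :: post) (pre ++ x :: post).
Proof.
  intros pre post x x' u u' Hlt Hx. unfold family_lt. rewrite !total_size_app. simpl.
  assert (Lx : length x' < length x \/ length x' = length x /\ word_lt x' x).
  { destruct Hx as [[-> ->]|[-> ->]]; rewrite ?winv_length; (destruct Hlt as [Hl|[Hl [H1 H2]]];
      [left; auto|right; split; auto]); unfold word_lt, word_key.
    - rewrite H1. apply one_lt_here; auto.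
    - rewrite !winv_winv, H1. apply one_lt_there, one_lt_here; auto. }
  destruct Lx as [Lx|[Lx Hw]]; [left; lia|right; split; [lia|]].
  apply one_lt_mid; auto.
Qed.

Lemma tail_half_replace : forall z1 s s', length s = length s' ->
  2 * length s <= length (z1 ++ s) ->
  (exists M, tail_half (z1 ++ s) = rev s ++ M /\ tail_half (z1 ++ s') = rev s' ++ M) /\
  tail_half (winv (z1 ++ s')) = tail_half (winv (z1 ++ s)).
Proof.
  intros z1 s s' Hl H. rewrite length_app in H.
  pose proof (Nat.div_mod_eq (length z1 + length s) 2).
  pose proof (Nat.mod_upper_bound (length z1 + length s) 2).
  split.
  - exists (rev (skipn (length z1 + length s - (length z1 + length s) / 2) z1)).
    unfold tail_half. rewrite !length_app, <- Hl. rewrite !skipn_app.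
    replace (length z1 + length s - (length z1 + length s) / 2 - length z1) with 0 by lia.
    simpl. rewrite !rev_app_distr. auto.
  - unfold tail_half. rewrite !winv_app, !length_app, !winv_length, <- Hl. rewrite !skipn_app.
    rewrite !winv_length, <- Hl. f_equal. f_equal.
    rewrite (Nat.add_comm (length s) (length z1)).
    rewrite !skipn_all2; auto; rewrite winv_length; lia.
Qed.

(** * The group H and its normal form *)

Lemma heq_refl : forall x, heq x x.
Proof. intros; apply rst_refl. Qed.

Lemma heq_sym : forall x y, heq x y -> heq y x.
Proof. intros; apply rst_sym; auto. Qed.

Lemma heq_trans : forall x y z, heq x y -> heq y z -> heq x z.
Proof. intros; eapply rst_trans; eauto. Qed.

Lemma step_ctx : forall u v x y, step x y -> step (u ++ x ++ v) (u ++ y ++ v).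
Proof.
  intros u v x y [u0 v0 a|u0 v0 n];
    replace (u ++ (u0 ++ v0) ++ v) with ((u ++ u0) ++ (v0 ++ v)) by (rewrite <- !app_assoc; auto).
  - replace (u ++ (u0 ++ [a; flip a] ++ v0) ++ v) with ((u ++ u0) ++ [a; flip a] ++ (v0 ++ v))
      by (rewrite <- !app_assoc; auto).
    apply step_cancel.
  - replace (u ++ (u0 ++ relator n ++ v0) ++ v) with ((u ++ u0) ++ relator n ++ (v0 ++ v))
      by (rewrite <- !app_assoc; auto).
    apply step_rel.
Qed.

Lemma heq_ctx : forall u v x y, heq x y -> heq (u ++ x ++ v) (u ++ y ++ v).
Proof.
  intros u v x y H. induction H.
  - apply rst_step. apply step_ctx; auto.
  - apply heq_refl.
  - apply heq_sym; auto.
  - eapply heq_trans; eauto.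
Qed.

Lemma heq_app : forall a a' b b', heq a a' -> heq b b' -> heq (a ++ b) (a' ++ b').
Proof.
  intros a a' b b' Ha Hb. apply heq_trans with (a' ++ b).
  - pose proof (heq_ctx [] b a a' Ha) as H. exact H.
  - pose proof (heq_ctx a' [] b b' Hb) as H. rewrite !app_nil_r in H. exact H.
Qed.

Lemma heq_cancel : forall x y a, heq (x ++ [a; flip a] ++ y) (x ++ y).
Proof. intros. apply heq_sym, rst_step, step_cancel. Qed.

Lemma heq_nf : forall w, heq w (nf w).
Proof.
  induction w as [|a w IH]; [apply heq_refl|].
  apply heq_trans with (a :: nf w).
  - apply (heq_app [a] [a] w (nf w)); auto. apply heq_refl.
  - change (heq (a :: nf w) (cons_red a (nf w))).
    destruct (nf w) as [|b r]; simpl; [apply heq_refl|].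
    destruct (letter_eq_dec b (flip a)); [subst b; apply (heq_cancel [] r a)|apply heq_refl].
Qed.

Lemma heq_inv_r : forall x, heq (x ++ winv x) [].
Proof.
  induction x as [|a x IH]; [apply heq_refl|].
  rewrite winv_cons. simpl. rewrite app_assoc.
  apply heq_trans with ([a] ++ [] ++ [flip a]).
  - apply (heq_ctx [a] [flip a]). exact IH.
  - apply (heq_cancel [] [] a).
Qed.

Lemma heq_inv_l : forall x, heq (winv x ++ x) [].
Proof. intros. rewrite <- (winv_winv x) at 2. apply heq_inv_r. Qed.

Lemma heq_inv : forall x y, heq x y -> heq (winv x) (winv y).
Proof.
  intros x y H. apply heq_trans with (winv x ++ y ++ winv y).
  - rewrite <- (app_nil_r (winv x)) at 1. apply heq_app; [apply heq_refl|apply heq_sym, heq_inv_r].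
  - apply heq_trans with (winv x ++ x ++ winv y).
    + apply heq_app; [apply heq_refl|apply heq_app; [apply heq_sym; auto|apply heq_refl]].
    + rewrite app_assoc. rewrite <- (app_nil_l (winv y)) at 2.
      apply heq_app; [apply heq_inv_l|apply heq_refl].
Qed.

Lemma heq_solve_l : forall p q, heq (p ++ q) [] -> heq p (winv q).
Proof.
  intros p q H. apply heq_trans with ((p ++ q) ++ winv q).
  - rewrite <- app_assoc. rewrite <- (app_nil_r p) at 1.
    apply heq_app; [apply heq_refl|apply heq_sym, heq_inv_r].
  - rewrite <- (app_nil_l (winv q)) at 2. apply heq_app; auto. apply heq_refl.
Qed.

Lemma heq_solve_r : forall p q, heq (p ++ q) [] -> heq q (winv p).
Proof.
  intros p q H. apply heq_trans with (winv p ++ (p ++ q)).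
  - rewrite app_assoc. rewrite <- (app_nil_l q) at 1.
    apply heq_app; [apply heq_sym, heq_inv_l|apply heq_refl].
  - rewrite <- (app_nil_r (winv p)) at 2. apply heq_app; auto. apply heq_refl.
Qed.

Lemma relator_eq : forall n, relator n =
  [(Y n, false); (X (n+1), true); (Y (n+1), false); (X (n+1), false)].
Proof. reflexivity. Qed.

Lemma heq_relator : forall n, heq (relator n) [].
Proof. intros. apply heq_sym, rst_step, (step_rel [] [] n). Qed.

Lemma y_down : forall n, heq [(Y n, false)]
  ([(X (n+1), true)] ++ winv [(Y (n+1), false)] ++ [(X (n+1), false)]).
Proof.
  intros. pose proof (heq_relator n) as H. rewrite relator_eq in H.
  exact (heq_solve_l [(Y n, false)] [(X (n+1), true); (Y (n+1), false); (X (n+1), false)] H).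
Qed.

Lemma y_up : forall n, heq [(Y (n+1), false)]
  ([(X (n+1), false)] ++ winv [(Y n, false)] ++ [(X (n+1), true)]).
Proof.
  intros. pose proof (heq_relator n) as H. rewrite relator_eq in H.
  apply (heq_solve_r [(Y n, false); (X (n+1), true)] [(Y (n+1), false); (X (n+1), false)]) in H.
  apply heq_trans with ([(Y (n+1), false); (X (n+1), false)] ++ [(X (n+1), true)]).
  - exact (heq_sym _ _ (heq_cancel [(Y (n+1), false)] [] (X (n+1), false))).
  - change ([(X (n+1), false)] ++ winv [(Y n, false)] ++ [(X (n+1), true)]) with
      (winv [(Y n, false); (X (n+1), true)] ++ [(X (n+1), true)]).
    apply heq_app; [exact H|apply heq_refl].
Qed.

(* [y_word n]: the expression of y_n through y_0 and x-letters given by the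
   relations, e.g. y_1 = x_1 y_0^-1 x_1^-1 and y_-1 = x_0^-1 y_0^-1 x_0. *)
Fixpoint y_word_pos (k : nat) : word :=
  match k with
  | O => [(Y 0%Z, false)]
  | S k' => [(X (Z.of_nat (S k')), false)] ++ winv (y_word_pos k') ++ [(X (Z.of_nat (S k')), true)]
  end.

Fixpoint y_word_neg (k : nat) : word :=
  match k with
  | O => [(Y 0%Z, false)]
  | S k' => [(X (- Z.of_nat k'), true)] ++ winv (y_word_neg k') ++ [(X (- Z.of_nat k'), false)]
  end.

Definition y_word (n : Z) : word :=
  match n with
  | Z0 => y_word_pos 0
  | Zpos p => y_word_pos (Pos.to_nat p)
  | Zneg p => y_word_neg (Pos.to_nat p)
  end.

Lemma y_word_of_nat : forall k, y_word (Z.of_nat k) = y_word_pos k.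
Proof. intros [|k]; auto. simpl. rewrite SuccNat2Pos.id_succ. reflexivity. Qed.

Lemma y_word_of_neg_nat : forall k, y_word (- Z.of_nat k) = y_word_neg k.
Proof. intros [|k]; auto. simpl. rewrite SuccNat2Pos.id_succ. reflexivity. Qed.

Lemma y_word_succ : forall n, (0 <= n)%Z ->
  y_word (n+1) = [(X (n+1), false)] ++ winv (y_word n) ++ [(X (n+1), true)].
Proof.
  intros n H. replace n with (Z.of_nat (Z.to_nat n)) by lia.
  replace (Z.of_nat (Z.to_nat n) + 1)%Z with (Z.of_nat (S (Z.to_nat n))) by lia.
  rewrite !y_word_of_nat. reflexivity.
Qed.

Lemma y_word_pred : forall n, (n < 0)%Z ->
  y_word n = [(X (n+1), true)] ++ winv (y_word (n+1)) ++ [(X (n+1), false)].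
Proof.
  intros n H. replace n with (- Z.of_nat (S (Z.to_nat (- n - 1))))%Z by lia.
  replace (- Z.of_nat (S (Z.to_nat (- n - 1))) + 1)%Z with (- Z.of_nat (Z.to_nat (- n - 1)))%Z
    by lia.
  rewrite !y_word_of_neg_nat. reflexivity.
Qed.

Lemma heq_y_word : forall n, heq [(Y n, false)] (y_word n).
Proof.
  assert (Hpos : forall k, heq [(Y (Z.of_nat k), false)] (y_word_pos k)).
  { induction k as [|k IH]; [apply heq_refl|].
    pose proof (y_up (Z.of_nat k)) as H.
    replace (Z.of_nat k + 1)%Z with (Z.of_nat (S k)) in H by lia.
    eapply heq_trans; [exact H|]. cbn [y_word_pos].
    apply heq_app; [apply heq_refl|apply heq_app; [apply heq_inv; auto|apply heq_refl]]. }
  assert (Hneg : forall k, heq [(Y (- Z.of_nat k), false)] (y_word_neg k)).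
  { induction k as [|k IH]; [apply heq_refl|].
    pose proof (y_down (- Z.of_nat (S k))) as H.
    replace (- Z.of_nat (S k) + 1)%Z with (- Z.of_nat k)%Z in H by lia.
    eapply heq_trans; [exact H|]. cbn [y_word_neg].
    apply heq_app; [apply heq_refl|apply heq_app; [apply heq_inv; auto|apply heq_refl]]. }
  intros n. destruct (Z_le_gt_dec 0 n).
  - replace n with (Z.of_nat (Z.to_nat n)) by lia. rewrite y_word_of_nat. apply Hpos.
  - replace n with (- Z.of_nat (Z.to_nat (- n)))%Z by lia. rewrite y_word_of_neg_nat. apply Hneg.
Qed.

Definition retract_letter (a : letter) : word :=
  match fst a with
  | X _ => [a]
  | Y n => if snd a then winv (y_word n) else y_word n
  end.

Definition retract (w : word) : word := flat_map retract_letter w.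

Lemma retract_app : forall u v, retract (u ++ v) = retract u ++ retract v.
Proof. intros; unfold retract; apply flat_map_app. Qed.

Lemma retract_letter_flip : forall a, retract_letter (flip a) = winv (retract_letter a).
Proof.
  intros [[m|n] e]; unfold retract_letter, flip; simpl; [reflexivity|].
  destruct e; simpl; rewrite ?winv_winv; reflexivity.
Qed.

Lemma heq_retract : forall w, heq w (retract w).
Proof.
  induction w as [|[[m|n] e] w IH]; [apply heq_refl|..];
    change ((?a, ?e) :: w) with ([(a, e)] ++ w);
    change (retract ([(?a, ?e)] ++ w)) with (retract_letter (a, e) ++ retract w);
    apply heq_app; auto; unfold retract_letter; simpl; [apply heq_refl|].
  destruct e; [|apply heq_y_word].
  change [(Y n, true)] with (winv [(Y n, false)]). apply heq_inv, heq_y_word.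
Qed.

Lemma retract_relator : forall n, nf (retract (relator n)) = [].
Proof.
  intros n. rewrite relator_eq. unfold retract. simpl flat_map. unfold retract_letter; simpl.
  assert (HXX : forall m, nf [(X m, true); (X m, false)] = [])
    by (intros; exact (nf_inv_l [(X m, false)])).
  destruct (Z_le_gt_dec 0 n) as [H|H].
  - rewrite (y_word_succ n H). set (E := y_word n).
    transitivity (nf (E ++ [(X (n+1), true); (X (n+1), false)] ++
                      (winv E ++ [(X (n+1), true); (X (n+1), false)])));
      [f_equal; simpl; rewrite <- !app_assoc; reflexivity|].
    rewrite nf_cancel_mid, app_assoc, nf_cancel_r by apply HXX. apply nf_inv_r.
  - rewrite (y_word_pred n) by lia. set (F := y_word (n+1)).
    transitivity (nf ([(X (n+1), true)] ++ (winv F ++ F) ++ [(X (n+1), false)])).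
    + transitivity (nf (([(X (n+1), true)] ++ winv F) ++ [(X (n+1), false); (X (n+1), true)]
                        ++ (F ++ [(X (n+1), false)])));
        [f_equal; simpl; rewrite <- !app_assoc; reflexivity|].
      rewrite nf_cancel_mid by exact (nf_inv_r [(X (n+1), false)]).
      f_equal. rewrite <- !app_assoc. reflexivity.
    + rewrite nf_cancel_mid by apply nf_inv_l. apply HXX.
Qed.

Lemma step_retract : forall x y, step x y -> nf (retract x) = nf (retract y).
Proof.
  intros x y [u v a|u v n]; rewrite !retract_app.
  - change (retract [a; flip a]) with (retract_letter a ++ retract_letter (flip a) ++ []).
    rewrite app_nil_r, retract_letter_flip, (nf_cancel_mid (retract_letter a ++ _)); auto.
    apply nf_inv_r.
  - rewrite (nf_cancel_mid (retract (relator n))); auto. apply retract_relator.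
Qed.

Lemma heq_iff_retract : forall x y, heq x y <-> nf (retract x) = nf (retract y).
Proof.
  split.
  - intros H. induction H; auto; [apply step_retract; auto|congruence].
  - intros H. apply heq_trans with (nf (retract x)).
    + eapply heq_trans; [apply heq_retract|apply heq_nf].
    + rewrite H. apply heq_sym. eapply heq_trans; [apply heq_retract|apply heq_nf].
Qed.

(* Basic words are those in the letters x_m and y_0; they are fixed by the
   retraction, so on them equality in H is free equality. *)
Definition basic_letter (a : letter) : Prop := match fst a with X _ => True | Y n => n = 0%Z end.
Definition basic (w : word) : Prop := forall a, In a w -> basic_letter a.

Lemma basic_app : forall u v, basic u -> basic v -> basic (u ++ v).
Proof. intros u v Hu Hv a Ha. apply in_app_or in Ha. destruct Ha; auto. Qed.

Lemma basic_winv : forall u, basic u -> basic (winv u).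
Proof.
  intros u H a Ha. unfold winv in Ha. apply in_rev, in_map_iff in Ha.
  destruct Ha as [b [E Hb]]. subst. apply H in Hb. destruct b as [[m|n] e]; exact Hb.
Qed.

Lemma basic_nf : forall u, basic u -> basic (nf u).
Proof. intros u H a Ha. apply H, nf_incl; auto. Qed.

Lemma basic_y_word : forall n, basic (y_word n).
Proof.
  assert (Hx : forall m e, basic [(X m, e)]) by (intros m e a [<-|[]]; exact I).
  assert (Hy : basic [(Y 0%Z, false)]) by (intros a [<-|[]]; reflexivity).
  assert (Hpos : forall k, basic (y_word_pos k))
    by (induction k; cbn [y_word_pos]; auto using basic_app, basic_winv).
  assert (Hneg : forall k, basic (y_word_neg k))
    by (induction k; cbn [y_word_neg]; auto using basic_app, basic_winv).
  intros [|p|p]; unfold y_word; auto.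
Qed.

Lemma basic_retract : forall w, basic (retract w).
Proof.
  induction w as [|a w IH]; [intros b []|].
  change (retract (a :: w)) with (retract_letter a ++ retract w). apply basic_app; auto.
  destruct a as [[m|n] e]; unfold retract_letter; simpl; [intros b [<-|[]]; exact I|].
  destruct e; auto using basic_winv, basic_y_word.
Qed.

Lemma retract_basic : forall w, basic w -> retract w = w.
Proof.
  induction w as [|a w IH]; intros H; auto.
  change (retract (a :: w)) with (retract_letter a ++ retract w).
  rewrite IH by (intros b Hb; apply H; right; auto).
  assert (Ha : basic_letter a) by (apply H; left; auto).
  destruct a as [[m|n] e]; unfold retract_letter, basic_letter in *; simpl in *; auto.
  subst n. destruct e; reflexivity.
Qed.

Lemma heq_nf_retract : forall g, heq (nf (retract g)) g.
Proof.
  intros g. apply heq_iff_retract. rewrite retract_basic; [apply nf_idem|].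
  apply basic_nf, basic_retract.
Qed.

(** * Subgroups generated by finite lists *)

Lemma evalw_app : forall {I} (b : I -> word) ws1 ws2,
  evalw b (ws1 ++ ws2) = evalw b ws1 ++ evalw b ws2.
Proof.
  intros I b ws1 ws2. induction ws1 as [|[i e] ws1 IH]; simpl; auto. rewrite IH, app_assoc; auto.
Qed.

Lemma sub_heq : forall V w w', heq w w' -> gen_sub V w' -> gen_sub V w.
Proof. intros V w w' H [ws [H1 H2]]. exists ws; split; auto. eapply heq_trans; eauto. Qed.

Lemma sub_in : forall V x, In x V -> gen_sub V x.
Proof.
  intros V x H. exists [(x, false)]. split; [intros p [<-|[]]; auto|].
  simpl. rewrite app_nil_r. apply heq_refl.
Qed.

Lemma sub_nil : forall V, gen_sub V [].
Proof. intros V. exists []. split; [intros p []|apply heq_refl]. Qed.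

Lemma sub_app : forall V x y, gen_sub V x -> gen_sub V y -> gen_sub V (x ++ y).
Proof.
  intros V x y [ws1 [H1 H2]] [ws2 [H3 H4]]. exists (ws1 ++ ws2). split.
  - intros p Hp. apply in_app_or in Hp. destruct Hp; auto.
  - rewrite evalw_app. apply heq_app; auto.
Qed.

Lemma sub_inv : forall V x, gen_sub V x -> gen_sub V (winv x).
Proof.
  assert (Hinv : forall ws : list (word * bool), winv (evalw (fun u => u) ws) =
            evalw (fun u => u) (rev (map (fun p => (fst p, negb (snd p))) ws))).
  { induction ws as [|[x e] ws IH]; simpl; auto.
    rewrite winv_app, IH, evalw_app. simpl. rewrite app_nil_r.
    destruct e; simpl; rewrite ?winv_winv; auto. }
  intros V x [ws [H1 H2]]. exists (rev (map (fun p => (fst p, negb (snd p))) ws)). split.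
  - intros p Hp. apply in_rev, in_map_iff in Hp. destruct Hp as [q [<- Hq]]. simpl. auto.
  - rewrite <- Hinv. apply heq_inv; auto.
Qed.

Lemma sub_in_sym : forall V z, in_sym V z -> gen_sub V z.
Proof.
  intros V z [Hz|Hz]; [apply sub_in; auto|].
  rewrite <- (winv_winv z). apply sub_inv, sub_in; auto.
Qed.

Lemma sub_trans : forall U V w,
  (forall x, In x U -> gen_sub V x) -> gen_sub U w -> gen_sub V w.
Proof.
  intros U V w HUV [ws [H1 H2]]. apply (sub_heq V w _ H2). clear H2 w.
  induction ws as [|[x e] ws IH]; simpl; [apply sub_nil|].
  apply sub_app.
  - assert (gen_sub V x) by (apply HUV, (H1 (x, e)); left; auto).
    destruct e; auto using sub_inv.
  - apply IH. intros; apply H1; right; auto.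
Qed.

Definition same_span (U V : list word) : Prop :=
  (forall x, In x U -> gen_sub V x) /\ (forall x, In x V -> gen_sub U x).

Lemma same_span_refl : forall U, same_span U U.
Proof. intros U; split; intros; apply sub_in; auto. Qed.

Lemma same_span_trans : forall U V W, same_span U V -> same_span V W -> same_span U W.
Proof.
  intros U V W [H1 H2] [H3 H4]. split; intros x Hx.
  - apply (sub_trans V W x H3). auto.
  - apply (sub_trans V U x H2). auto.
Qed.

Lemma in_mid_ne : forall (pre post : list word) x y,
  In y (pre ++ x :: post) -> y <> x -> In y (pre ++ post).
Proof.
  intros pre post x y H Hne. apply in_app_or in H. apply in_or_app.
  destruct H as [H|[H|H]]; auto. congruence.
Qed.

Lemma in_mid_sub : forall (pre post : list word) x y,
  In y (pre ++ post) -> In y (pre ++ x :: post).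
Proof. intros pre post x y H. apply in_app_or in H. apply in_or_app. destruct H; simpl; auto. Qed.

Lemma remove_span : forall pre x post,
  gen_sub (pre ++ post) x -> same_span (pre ++ x :: post) (pre ++ post).
Proof.
  intros pre x post H. split; intros y Hy.
  - destruct (classic (y = x)) as [->|Hne]; auto. apply sub_in. eapply in_mid_ne; eauto.
  - apply sub_in. apply in_mid_sub; auto.
Qed.

Lemma move_span : forall pre x x' post z, gen_sub (pre ++ post) z ->
  (heq x' (x ++ z) \/ heq x' (z ++ x)) -> same_span (pre ++ x :: post) (pre ++ x' :: post).
Proof.
  intros pre x x' post z Hz Hh.
  assert (Hsub : forall t, gen_sub (pre ++ t :: post) z).
  { intros t. apply (sub_trans (pre ++ post)); auto.
    intros y Hy. apply sub_in, in_mid_sub; auto. }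
  assert (Hself : forall t, gen_sub (pre ++ t :: post) t)
    by (intros t; apply sub_in, in_or_app; simpl; auto).
  split; intros y Hy.
  - destruct (classic (y = x)) as [->|Hne]; [|apply sub_in, in_mid_sub; eapply in_mid_ne; eauto].
    destruct Hh as [Hh|Hh].
    + apply (sub_heq _ _ (x' ++ winv z)); [|apply sub_app; auto using sub_inv].
      apply heq_trans with (x ++ z ++ winv z).
      * rewrite <- (app_nil_r x) at 1. apply heq_app; [apply heq_refl|apply heq_sym, heq_inv_r].
      * rewrite app_assoc. apply heq_app; [apply heq_sym; auto|apply heq_refl].
    + apply (sub_heq _ _ (winv z ++ x')); [|apply sub_app; auto using sub_inv].
      apply heq_trans with ((winv z ++ z) ++ x).
      * rewrite <- (app_nil_l x) at 1. apply heq_app; [apply heq_sym, heq_inv_l|apply heq_refl].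
      * rewrite <- app_assoc. apply heq_app; [apply heq_refl|apply heq_sym; auto].
  - destruct (classic (y = x')) as [->|Hne]; [|apply sub_in, in_mid_sub; eapply in_mid_ne; eauto].
    destruct Hh as [Hh|Hh]; eapply sub_heq; eauto; apply sub_app; auto.
Qed.

(** * Nielsen moves and Nielsen reduction *)

Definition reduced_basic_family (U : list word) : Prop :=
  forall x, In x U -> is_reduced x /\ basic x.

Lemma in_sym_elem : forall U u, in_sym U u -> exists x, In x U /\ (u = x \/ u = winv x).
Proof.
  intros U u [H|H]; [exists u; auto|].
  exists (winv u). split; auto. right. rewrite winv_winv; auto.
Qed.

Lemma in_sym_winv : forall U u, in_sym U u -> in_sym U (winv u).
Proof. intros U u [H|H]; [right; rewrite winv_winv|left]; auto. Qed.

Lemma in_sym_reduced_basic : forall U u, reduced_basic_family U -> in_sym U u ->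
  is_reduced u /\ basic u.
Proof.
  intros U u HA Hp. destruct (in_sym_elem U u Hp) as [x [Hx [->| ->]]]; apply HA in Hx; auto.
  destruct Hx; split; [apply is_reduced_winv|apply basic_winv]; auto.
Qed.

Lemma reduced_basic_replace : forall pre x x' post,
  reduced_basic_family (pre ++ x :: post) -> is_reduced x' -> basic x' ->
  reduced_basic_family (pre ++ x' :: post).
Proof.
  intros pre x x' post HA H1 H2 y Hy. destruct (classic (y = x')) as [->|Hne]; auto.
  apply HA. apply in_mid_sub. eapply in_mid_ne; eauto.
Qed.

Lemma reduced_basic_remove : forall pre x post,
  reduced_basic_family (pre ++ x :: post) -> reduced_basic_family (pre ++ post).
Proof. intros pre x post HA y Hy. apply HA, in_mid_sub; auto. Qed.

Lemma nielsen_replace : forall U u v u', reduced_basic_family U ->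
  in_sym U u -> in_sym U v -> v <> u -> v <> winv u ->
  heq u' (u ++ v) -> is_reduced u' -> basic u' -> replace_lt u' u ->
  exists U', family_lt U' U /\ reduced_basic_family U' /\ same_span U U'.
Proof.
  intros U u v u' HA Hu Hv Hvu Hvu' Hh Hr Hb Hlt.
  destruct (in_sym_elem U u Hu) as [x [Hx Hux]].
  destruct (in_sym_elem U v Hv) as [y [Hy Hvy]].
  assert (Nyx : y <> x).
  { intros <-. destruct Hux as [->| ->], Hvy as [->| ->]; auto.
    apply Hvu'. rewrite winv_winv; auto. }
  destruct (in_split x U Hx) as [pre [post EU]]. subst U.
  assert (Hz : gen_sub (pre ++ post) v).
  { apply sub_in_sym. assert (In y (pre ++ post)) by (eapply in_mid_ne; eauto).
    destruct Hvy as [->| ->]; [left|right; rewrite winv_winv]; auto. }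
  destruct Hux as [Eu|Eu].
  - exists (pre ++ u' :: post). split; [|split].
    + apply (family_lt_replace pre post x u' u u'); auto.
    + apply reduced_basic_replace with x; auto.
    + apply (move_span pre x u' post v Hz). left. subst; auto.
  - exists (pre ++ winv u' :: post). split; [|split].
    + apply (family_lt_replace pre post x (winv u') u u'); auto.
      right. rewrite Eu, winv_winv. auto.
    + apply reduced_basic_replace with x; auto using is_reduced_winv, basic_winv.
    + apply (move_span pre x _ post (winv v)); [apply sub_inv; auto|right].
      apply heq_trans with (winv (u ++ v)); [apply heq_inv; auto|].
      rewrite winv_app, Eu, winv_winv. apply heq_refl.
Qed.

(* Move when more than half of [v] cancels in [u v]: replace [u] by the
   shorter reduced form of [u v]. *)
Lemma nielsen_shorten : forall U u v, reduced_basic_family U ->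
  (forall x, In x U -> x <> []) ->
  in_sym U u -> in_sym U v -> v <> winv u -> length v < 2 * cancel_len u v ->
  exists U', family_lt U' U /\ reduced_basic_family U' /\ same_span U U'.
Proof.
  intros U u v HA HnE Hu Hv Hne Hlt.
  destruct (in_sym_reduced_basic U u HA Hu) as [Ru Bu].
  destruct (in_sym_reduced_basic U v HA Hv) as [Rv Bv].
  assert (Hvu : v <> u).
  { intros ->. pose proof (cancel_len_self u Ru (in_sym_nonempty U u HnE Hu)). lia. }
  destruct (cancel_split u v Ru Rv) as [u1 [s [v1 [E1 [E2 [E3 [E4 E5]]]]]]].
  apply (nielsen_replace U u v (u1 ++ v1)); auto.
  - rewrite <- E4. apply heq_sym, heq_nf.
  - rewrite <- E4. apply basic_nf, basic_app; auto.
  - left. rewrite length_app.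
    assert (length u = length u1 + length s) by (rewrite E1, length_app; auto).
    assert (length v = length s + length v1) by (rewrite E2, length_app, winv_length; auto).
    lia.
Qed.

(* Move when exactly half of [v = s^-1 s2] cancels against [u = u1 s], and
   the cancelled half is lexicographically larger: replace [u] by [u1 s2],
   of the same length but with a smaller last half. *)
Lemma nielsen_half_move : forall U u v s s2, reduced_basic_family U ->
  (forall x, In x U -> x <> []) ->
  in_sym U u -> in_sym U v -> v <> winv u -> 2 * cancel_len u v <= length u ->
  v = winv s ++ s2 -> length s = cancel_len u v -> length s2 = length s ->
  lex_lt (rev s2) (rev s) ->
  exists U', family_lt U' U /\ reduced_basic_family U' /\ same_span U U'.
Proof.
  intros U u v s s2 HA HnE Hu Hv Hne Hhalf Ev Hs Hs2 Hlex.
  destruct (in_sym_reduced_basic U u HA Hu) as [Ru Bu].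
  destruct (in_sym_reduced_basic U v HA Hv) as [Rv Bv].
  destruct (cancel_split u v Ru Rv) as [u1 [t [v1 [E1 [E2 [E3 [E4 E5]]]]]]].
  destruct (app_split_eq (winv t) v1 (winv s) s2) as [Ets Ev1];
    [congruence|rewrite !winv_length; lia|].
  apply winv_inj in Ets. subst t v1.
  assert (Hvu : v <> u).
  { intros ->. pose proof (cancel_len_self u Ru (in_sym_nonempty U u HnE Hu)).
    assert (length u = length s + length s2) by (rewrite Ev, length_app, winv_length; auto).
    lia. }
  apply (nielsen_replace U u v (u1 ++ s2)); auto.
  - rewrite <- E4. apply heq_sym, heq_nf.
  - rewrite <- E4. apply basic_nf, basic_app; auto.
  - destruct (tail_half_replace u1 s s2) as [[M [Q1 Q2]] Q3]; [lia|rewrite <- E1; lia|].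
    rewrite <- E1 in Q1, Q3. right. split; [|split; auto].
    + rewrite E1, !length_app. lia.
    + rewrite Q1, Q2. split; [rewrite !length_app, !length_rev; lia|apply lex_lt_app; auto].
Qed.

(* Move when condition (N2) fails for [u v w] (while (N1) holds): then [v]
   is split exactly in half, [v = s^-1 s2], with [s] cancelling against [u]
   and [s2^-1] against [w]; according to the lexicographic comparison of the
   halves, apply the half move to [u v] or to [w^-1 v^-1]. *)
Lemma nielsen_triple_move : forall U u v w, reduced_basic_family U ->
  (forall x, In x U -> x <> []) ->
  (forall u v, in_sym U u -> in_sym U v -> v <> winv u ->
     2 * cancel_len u v <= length u /\ 2 * cancel_len u v <= length v) ->
  in_sym U u -> in_sym U v -> in_sym U w -> v <> winv u -> w <> winv v ->
  length v <= cancel_len u v + cancel_len v w ->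
  exists U', family_lt U' U /\ reduced_basic_family U' /\ same_span U U'.
Proof.
  intros U u v w HA HnE HN1 Hu Hv Hw Hne1 Hne2 Hle.
  destruct (HN1 u v Hu Hv Hne1) as [K1 K2]. destruct (HN1 v w Hv Hw Hne2) as [K3 K4].
  destruct (in_sym_reduced_basic U u HA Hu) as [Ru _].
  destruct (in_sym_reduced_basic U v HA Hv) as [Rv _].
  destruct (in_sym_reduced_basic U w HA Hw) as [Rw _].
  destruct (cancel_split u v Ru Rv) as [u1 [s [v1 [E1 [E2 [E3 _]]]]]].
  destruct (cancel_split v w Rv Rw) as [v2 [s2 [w1 [F1 [F2 [F3 _]]]]]].
  assert (Lv1 : length v = length s + length v1) by (rewrite E2, length_app, winv_length; auto).
  assert (Lv2 : length v = length v2 + length s2) by (rewrite F1, length_app; auto).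
  destruct (app_split_eq (winv s) v1 v2 s2) as [G1 G2]; [congruence|rewrite winv_length; lia|].
  subst v1 v2.
  assert (Nss : s <> s2).
  { intros <-. apply (in_sym_nonempty U v HnE Hv). rewrite E2 in Rv.
    apply winv_app_self_reduced in Rv. subst s. rewrite E2. reflexivity. }
  destruct (lex_lt_total (rev s2) (rev s)) as [Lt|Lt]; [rewrite !length_rev; lia|
    intro E; apply Nss; rewrite <- (rev_involutive s), <- E, rev_involutive; auto|..].
  - apply (nielsen_half_move U u v s s2); auto. lia.
  - apply (nielsen_half_move U (winv w) (winv v) s2 s); auto using in_sym_winv.
    + rewrite winv_winv. intro E. apply Hne2. symmetry. exact E.
    + rewrite cancel_len_inv, winv_length. lia.
    + rewrite E2, winv_app, winv_winv. reflexivity.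
    + rewrite cancel_len_inv. auto.
    + lia.
Qed.

Lemma nielsen_delete : forall pre x post, reduced_basic_family (pre ++ x :: post) ->
  gen_sub (pre ++ post) x ->
  exists U', family_lt U' (pre ++ x :: post) /\ reduced_basic_family U' /\
             same_span (pre ++ x :: post) U'.
Proof.
  intros pre x post HA Hx. exists (pre ++ post).
  split; [apply family_lt_remove|split; [eapply reduced_basic_remove; eauto|]].
  apply remove_span; auto.
Qed.

Lemma nielsen_move_or_reduced : forall U, reduced_basic_family U ->
  (exists U', family_lt U' U /\ reduced_basic_family U' /\ same_span U U') \/
  nielsen_reduced U.
Proof.
  intros U HA.
  destruct (classic (In [] U)) as [HE|HnE].
  { left. destruct (in_split [] U HE) as [pre [post ->]].
    apply nielsen_delete; [auto|apply sub_nil]. }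
  assert (HnE' : forall x, In x U -> x <> []) by (intros x Hx ->; auto).
  destruct (classic (exists pre x post, U = pre ++ x :: post /\
              (In x (pre ++ post) \/ In (winv x) (pre ++ post)))) as [[pre [x [post [-> Hd]]]]|HnD].
  { left. apply nielsen_delete; [auto|apply sub_in_sym; destruct Hd; [left|right]; auto]. }
  destruct (classic (exists u v, in_sym U u /\ in_sym U v /\ v <> winv u /\
              (length u < 2 * cancel_len u v \/ length v < 2 * cancel_len u v)))
    as [[u [v [Hu [Hv [Hne [Hl|Hl]]]]]]|HnN1].
  { left. apply (nielsen_shorten U (winv v) (winv u)); auto using in_sym_winv.
    - intro E. apply Hne. rewrite <- (winv_winv v), E, winv_winv. reflexivity.
    - rewrite cancel_len_inv, winv_length. exact Hl. }
  { left. apply (nielsen_shorten U u v); auto. }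
  assert (HN1 : forall u v, in_sym U u -> in_sym U v -> v <> winv u ->
            2 * cancel_len u v <= length u /\ 2 * cancel_len u v <= length v).
  { intros u v Hu Hv Hne.
    destruct (Nat.le_gt_cases (2 * cancel_len u v) (length u));
    destruct (Nat.le_gt_cases (2 * cancel_len u v) (length v)); auto;
    exfalso; apply HnN1; exists u, v; repeat split; auto. }
  destruct (classic (exists u v w, in_sym U u /\ in_sym U v /\ in_sym U w /\ v <> winv u /\
              w <> winv v /\ length v <= cancel_len u v + cancel_len v w))
    as [[u [v [w [Hu [Hv [Hw [H1 [H2 H3]]]]]]]]|HnN2].
  { left. apply (nielsen_triple_move U u v w); auto. }
  right. split; [exact HnE'|split; [|split; [exact HN1|]]].
  - intros pre x post EU. split; intro Hd; apply HnD; exists pre, x, post; auto.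
  - intros u v w Hu Hv Hw H1 H2.
    destruct (Nat.lt_ge_cases (cancel_len u v + cancel_len v w) (length v)); auto.
    exfalso; apply HnN2; exists u, v, w; repeat split; auto.
Qed.

Theorem nielsen_reduction : forall U, reduced_basic_family U ->
  exists V, reduced_basic_family V /\ nielsen_reduced V /\ same_span U V.
Proof.
  intros U. induction U as [U IH] using (well_founded_induction family_lt_wf). intros HA.
  destruct (nielsen_move_or_reduced U HA) as [[U' [Hlt [HA' HS]]]|HN].
  - destruct (IH U' Hlt HA') as [V [HV [HN HS']]].
    exists V. split; [auto|split; [auto|eapply same_span_trans; eauto]].
  - exists U. split; [auto|split; [auto|apply same_span_refl]].
Qed.

(** * Nielsen-reduced families are free bases *)

Lemma reduced_basic_all_reduced : forall V, reduced_basic_family V -> all_reduced V.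
Proof. intros V HA x Hx. apply HA; auto. Qed.

Lemma nielsen_no_inverse : forall V x, all_reduced V -> nielsen_reduced V ->
  In x V -> In (winv x) V -> False.
Proof.
  intros V x HA [HN0 [HN1 _]] Hx Hy.
  destruct (classic (winv x = x)) as [Exy|Nxy].
  - apply (HN0 x Hx). apply winv_fixed_reduced; auto.
  - destruct (in_split x V Hx) as [pre [post ->]].
    apply (HN1 pre x post eq_refl). eapply in_mid_ne; eauto.
Qed.

Definition basis_index (V : list word) : Type := {x : word | In x V}.
Definition basis_elt (V : list word) (i : basis_index V) : word := proj1_sig i.
Definition signed_elt (V : list word) (p : basis_index V * bool) : word :=
  if snd p then winv (basis_elt V (fst p)) else basis_elt V (fst p).

Lemma evalw_concat : forall V ws, evalw (basis_elt V) ws = concat (map (signed_elt V) ws).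
Proof. intros V. induction ws as [|[i e] ws IH]; simpl; auto. rewrite IH. reflexivity. Qed.

Lemma signed_elt_not_inverse : forall V, all_reduced V -> nielsen_reduced V ->
  forall i e j f, ~ (i = j /\ f = negb e) -> signed_elt V (j, f) <> winv (signed_elt V (i, e)).
Proof.
  intros V HA HN [x Hx] e [y Hy] f Hn E. unfold signed_elt, basis_elt in E; simpl in E.
  destruct e, f; rewrite ?winv_winv in E.
  - subst x. apply (nielsen_no_inverse V y HA HN Hy Hx).
  - subst y. apply Hn. split; auto. f_equal. apply proof_irrelevance.
  - apply winv_inj in E. subst y. apply Hn. split; auto. f_equal. apply proof_irrelevance.
  - subst y. apply (nielsen_no_inverse V x HA HN Hx Hy).
Qed.

Lemma no_inverse_pair_signed : forall V, all_reduced V -> nielsen_reduced V ->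
  forall ws, reduced ws -> no_inverse_pair (map (signed_elt V) ws).
Proof.
  intros V HA HN. induction ws as [|[i e] ws IH]; simpl; auto.
  destruct ws as [|[j f] ws]; simpl; auto. intros [H1 H2]. split.
  - apply (signed_elt_not_inverse V HA HN i e j f H1).
  - apply IH. exact H2.
Qed.

Lemma in_sym_signed : forall V ws, Forall (in_sym V) (map (signed_elt V) ws).
Proof.
  intros V. induction ws as [|[[x Hx] e] ws IH]; simpl; constructor; auto.
  unfold signed_elt, basis_elt; simpl. destruct e; [right; rewrite winv_winv|left]; auto.
Qed.

Lemma basic_evalw : forall V, (forall x, In x V -> basic x) ->
  forall ws, basic (evalw (basis_elt V) ws).
Proof.
  intros V HC. induction ws as [|[[x Hx] e] ws IH]; simpl; [intros a []|].
  apply basic_app; auto. destruct e; unfold basis_elt; simpl; auto using basic_winv.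
Qed.

(* A Nielsen-reduced family of basic words is free: since basic words are
   fixed by the retraction, triviality in H is free triviality. *)
Lemma nielsen_basis_free : forall V, reduced_basic_family V -> nielsen_reduced V ->
  forall ws : list (basis_index V * bool), ws <> [] -> reduced ws ->
  ~ heq (evalw (basis_elt V) ws) [].
Proof.
  intros V HA HN ws Hne Hr H.
  pose proof (reduced_basic_all_reduced V HA) as HA'.
  apply heq_iff_retract in H. simpl in H.
  rewrite retract_basic in H by (apply basic_evalw; intros x Hx; apply HA; auto).
  rewrite evalw_concat in H.
  apply (nielsen_product_nontrivial V HA' HN (map (signed_elt V) ws)); auto.
  - destruct ws; simpl; congruence.
  - apply in_sym_signed.
  - apply no_inverse_pair_signed; auto.
Qed.

Lemma evalw_lift : forall V (ws : list (word * bool)), (forall p, In p ws -> In (fst p) V) ->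
  exists wsI : list (basis_index V * bool), evalw (basis_elt V) wsI = evalw (fun u => u) ws.
Proof.
  intros V. induction ws as [|[x e] ws IH]; intros H; [exists []; auto|].
  assert (Hx : In x V) by (apply (H (x, e)); left; auto).
  destruct IH as [wsI E]; [intros; apply H; right; auto|].
  exists ((exist _ x Hx, e) :: wsI). simpl. rewrite E. reflexivity.
Qed.

Theorem locally_free : H_locally_free.
Proof.
  intros gs.
  set (U := map (fun g => nf (retract g)) gs).
  assert (HA : reduced_basic_family U).
  { intros x Hx. apply in_map_iff in Hx. destruct Hx as [g [<- _]].
    split; [apply nf_reduced|apply basic_nf, basic_retract]. }
  destruct (nielsen_reduction U HA) as [V [HV [HN [HUV HVU]]]].
  assert (HUgs : same_span U gs).
  { split; intros z Hz.
    - apply in_map_iff in Hz. destruct Hz as [g [<- Hg]].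
      apply (sub_heq gs _ g); [apply heq_nf_retract|apply sub_in; auto].
    - apply (sub_heq U _ (nf (retract z))); [apply heq_sym, heq_nf_retract|].
      apply sub_in, in_map_iff. exists z; auto. }
  exists (basis_index V), (basis_elt V). split; [|split].
  - intros [x Hx]. unfold basis_elt; simpl. apply (sub_trans U); [apply HUgs|auto].
  - intros w Hw.
    assert (HwV : gen_sub V w)
      by (apply (sub_trans U); auto; apply (sub_trans gs); [apply HUgs|auto]).
    destruct HwV as [ws [H1 H2]]. destruct (evalw_lift V ws H1) as [wsI E].
    exists wsI. rewrite E. exact H2.
  - intros ws Hne Hr. apply nielsen_basis_free; auto.
Qed.

(** * Nontriviality of the generators *)

(* The exponent sum in the y-letters: an invariant of free reduction. *)
Definition y_letter_sign (a : letter) : Z :=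
  match fst a with Y _ => if snd a then (-1)%Z else 1%Z | X _ => 0%Z end.
Definition y_exp_sum (w : word) : Z :=
  fold_right (fun a acc => (y_letter_sign a + acc)%Z) 0%Z w.

Lemma y_exp_sum_app : forall u v, y_exp_sum (u ++ v) = (y_exp_sum u + y_exp_sum v)%Z.
Proof. induction u; simpl; intros; auto. rewrite IHu. lia. Qed.

Lemma y_letter_sign_flip : forall a, y_letter_sign (flip a) = (- y_letter_sign a)%Z.
Proof. intros [[m|n] [|]]; reflexivity. Qed.

Lemma y_exp_sum_winv : forall u, y_exp_sum (winv u) = (- y_exp_sum u)%Z.
Proof.
  induction u as [|a u IH]; auto.
  rewrite winv_cons, y_exp_sum_app, IH. simpl. rewrite y_letter_sign_flip. lia.
Qed.

Lemma y_exp_sum_nf : forall w, y_exp_sum (nf w) = y_exp_sum w.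
Proof.
  induction w as [|a w IH]; auto.
  change (y_exp_sum (cons_red a (nf w)) = (y_letter_sign a + y_exp_sum w)%Z).
  rewrite <- IH. destruct (nf w) as [|b r]; simpl; auto.
  destruct (letter_eq_dec b (flip a)); simpl; auto. subst b. rewrite y_letter_sign_flip. lia.
Qed.

(* [y_word n] is a conjugate of y_0 or y_0^-1 by x-letters. *)
Lemma y_exp_sum_y_word : forall n, y_exp_sum (y_word n) = 1%Z \/ y_exp_sum (y_word n) = (-1)%Z.
Proof.
  assert (Hpos : forall k, y_exp_sum (y_word_pos k) = 1%Z \/ y_exp_sum (y_word_pos k) = (-1)%Z).
  { induction k; [left; reflexivity|]. cbn [y_word_pos].
    rewrite !y_exp_sum_app, y_exp_sum_winv. simpl. lia. }
  assert (Hneg : forall k, y_exp_sum (y_word_neg k) = 1%Z \/ y_exp_sum (y_word_neg k) = (-1)%Z).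
  { induction k; [left; reflexivity|]. cbn [y_word_neg].
    rewrite !y_exp_sum_app, y_exp_sum_winv. simpl. lia. }
  intros [|p|p]; unfold y_word; auto.
Qed.

Theorem lemma3p1 :
  H_locally_free /\
  (forall m : Z, ~ heq (gx m) nil) /\
  (forall n : Z, ~ heq (gy n) nil).
Proof.
  split; [exact locally_free|split].
  - (* x_m is basic and reduced, hence its own normal form *)
    intros m H. apply heq_iff_retract in H. discriminate H.
  - (* the normal form of y_n has y-exponent sum +-1 *)
    intros n H. apply heq_iff_retract in H. unfold gy, retract in H. simpl in H.
    rewrite app_nil_r in H. apply (f_equal y_exp_sum) in H.
    rewrite y_exp_sum_nf in H. change (y_exp_sum (y_word n) = 0%Z) in H.
    destruct (y_exp_sum_y_word n); lia.
Qed.
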